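(* Let $G$ be a finite group. Then there exist $d\ge1$ and $w\in F_d$ with $w(G)=[G,G]$. Moreover, if $G$ is a finite $p$-group, then there exist $d'\ge1$ and $w'\in F_{d'}$ with $w'(G)=\Phi(G)$.
   Context: $F_d$ is the free group on $d$ letters; for $w\in F_d$, $w(G)$ is the image of the word map $G^d\to G$ given by evaluating $w$. $\Phi(G)$ is the Frattini subgroup. *)

From HB Require Import structures.
From mathcomp Require Import all_boot all_fingroup all_solvable.
Set Implicit Arguments. Unset Strict Implicit. Unset Printing Implicit Defensive.

(* Words in d letters x_0,...,x_{d-1}: group terms.  Every element of the free
   group F_d is represented by such a term, and any two terms representing
   the same element of F_d induce the same word map on every group, so
   quantifying over terms is the same as quantifying over F_d. *)
Inductive gword (d : nat) : Type :=
  | GVar of 'I_d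
  | GOne
  | GMul of gword d & gword d
  | GInv of gword d.

Section WordMap.
Variable gT : finGroupType.
Local Open Scope group_scope.

Fixpoint gword_eval (d : nat) (w : gword d) (g : 'I_d -> gT) : gT :=
  match w with
  | GVar i => g i
  | GOne => 1
  | GMul u v => gword_eval u g * gword_eval v g
  | GInv u => (gword_eval u g)^-1
  end.

Definition word_image (d : nat) (w : gword d) (G : {set gT}) : {set gT} :=
  [set x | [exists g : {ffun 'I_d -> gT},
              [forall i, g i \in G] && (x == gword_eval w g)]].
End WordMap.

From mathcomp Require Import all_boot all_fingroup all_solvable.
Local Open Scope group_scope.
Set Implicit Arguments. Unset Strict Implicit.

(* Call a subset A of G a word set of G if A = w(G) for some word w in d >= 1
   letters.  Word sets are closed under products: concatenating two words on
   disjoint sets of letters multiplies their images.  Hence every power A^n of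
   a word set is one, and since in a finite group <<A>> = (1 |: A)^n for some
   n, the subgroup generated by a word set containing 1 is again a word set.
   The commutator word [x_0, x_1] has image {[x, y] | x, y in G}, which
   generates [G, G]; the power word x_0^p has image {x^p | x in G}, which
   generates Mho^1(G).  For a p-group G one has Phi(G) = G' Mho^1(G), and since
   G' normalises Mho^1(G) this join is the product set, a word set again. *)

Fixpoint rename d1 d2 (f : 'I_d1 -> 'I_d2) (w : gword d1) : gword d2 :=
  match w with
  | GVar i => GVar (f i)
  | GOne => GOne _
  | GMul u v => GMul (rename f u) (rename f v)
  | GInv u => GInv (rename f u)
  end.

Definition wcat d1 d2 (w1 : gword d1) (w2 : gword d2) : gword (d1 + d2) :=
  GMul (rename (@lshift d1 d2) w1) (rename (@rshift d1 d2) w2).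

Definition wcomm : gword 2 :=
  GMul (GInv (GVar ord0)) (GMul (GMul (GInv (GVar ord_max)) (GVar ord0)) (GVar ord_max)).

Fixpoint wpow (n : nat) : gword 1 :=
  match n with 0 => @GOne 1%N | n.+1 => GMul (GVar ord0) (wpow n) end.

Section WordSets.
Variable gT : finGroupType.

Lemma eval_rename d1 d2 (f : 'I_d1 -> 'I_d2) (w : gword d1) (g : 'I_d2 -> gT) :
  gword_eval (rename f w) g = gword_eval w (fun i => g (f i)).
Proof. by elim: w => /= [i|//|u IHu v IHv|u IHu]; rewrite ?IHu ?IHv. Qed.

Lemma eval_ext d (w : gword d) (g h : 'I_d -> gT) :
  g =1 h -> gword_eval w g = gword_eval w h.
Proof. by move=> e; elim: w => /= [i|//|u IHu v IHv|u IHu]; rewrite ?IHu ?IHv ?e. Qed.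

Lemma eval_wpow n (g : 'I_1 -> gT) : gword_eval (wpow n) g = g ord0 ^+ n.
Proof. by elim: n => //= n ->; rewrite expgS. Qed.

Lemma word_imageP d (w : gword d) (A : {set gT}) x :
  reflect (exists2 g : 'I_d -> gT, (forall i, g i \in A) & x = gword_eval w g)
          (x \in word_image w A).
Proof.
rewrite inE; apply: (iffP existsP) => [[g /andP[/forallP gA /eqP ->]]|[g gA ->]].
  by exists g.
exists (finfun g); apply/andP; split; first by apply/forallP => i; rewrite ffunE.
by apply/eqP/eval_ext => i; rewrite ffunE.
Qed.

Lemma word_image_cat d1 d2 (w1 : gword d1) (w2 : gword d2) (A : {set gT}) :
  word_image (wcat w1 w2) A = word_image w1 A * word_image w2 A.
Proof.
apply/setP => x; apply/word_imageP/mulsgP => [[g gA ->]|[y z]].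
  exists (gword_eval w1 (g \o @lshift d1 d2)) (gword_eval w2 (g \o @rshift d1 d2)).
  - by apply/word_imageP; exists (g \o @lshift d1 d2) => // i; apply: gA.
  - by apply/word_imageP; exists (g \o @rshift d1 d2) => // i; apply: gA.
  - by rewrite /= !eval_rename.
case/word_imageP=> g1 g1A -> /word_imageP[g2 g2A ->] ->.
exists (fun i => match split i with inl j => g1 j | inr k => g2 k end).
  by move=> i; case: (split i).
rewrite /= !eval_rename; congr (_ * _); apply: eval_ext => i.
  by rewrite (unsplitK (inl i)).
by rewrite (unsplitK (inr i)).
Qed.

Variable G : {group gT}.

Definition word_set (A : {set gT}) : Prop :=
  exists (d : nat) (w : gword d), (0 < d)%N /\ word_image w G = A.

Lemma word_set1 : word_set 1.
Proof.
exists 1%N, (@GOne 1%N); split=> //; apply/setP => x.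
apply/word_imageP/set1gP => [[g _ ->] //|->].
by exists (fun=> 1) => // i; apply: group1.
Qed.

Lemma word_setM (A B : {set gT}) : word_set A -> word_set B -> word_set (A * B).
Proof.
move=> [d1 [w1 [d1_gt0 <-]]] [d2 [w2 [_ <-]]].
by exists (d1 + d2)%N, (wcat w1 w2); rewrite word_image_cat addn_gt0 d1_gt0.
Qed.

Lemma word_setX (A : {set gT}) n : word_set A -> word_set (A ^+ n).
Proof.
move=> wA; elim: n => [|n IHn]; first exact: word_set1.
by rewrite expgS; apply: word_setM.
Qed.

(* In a finite group <<A>> is a power of 1 |: A, which is A when 1 \in A. *)
Lemma word_set_gen (A : {set gT}) : 1 \in A -> word_set A -> word_set <<A>>.
Proof.
move=> A1 wA; have [n ->] := gen_expgs A.
by rewrite (setUidPr _) ?sub1set //; apply: word_setX.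
Qed.

Lemma word_set_commg : word_set (commg_set G G).
Proof.
exists 2, wcomm; split=> //; apply/setP => x.
apply/word_imageP/imset2P => [[g gG ->]|[y z yG zG ->]].
  by exists (g ord0) (g ord_max); rewrite // /commg /conjg /= !mulgA.
exists (fun i : 'I_2 => if i == ord0 then y else z); first by move=> i; case: ifP.
by rewrite /= /commg /conjg !mulgA.
Qed.

Lemma word_set_powers n : word_set [set x ^+ n | x in G].
Proof.
exists 1%N, (wpow n); split=> //; apply/setP => x.
apply/word_imageP/imsetP => [[g gG ->]|[y yG ->]].
  by exists (g ord0); rewrite ?eval_wpow.
by exists (fun=> y); rewrite ?eval_wpow.
Qed.

Lemma word_set_derived : word_set [~: G, G].
Proof.
apply: word_set_gen word_set_commg.
by apply/imset2P; exists 1 1; rewrite ?group1 ?comm1g.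
Qed.

Lemma word_set_Mho1 (p : nat) : p.-group G -> word_set 'Mho^1(G).
Proof.
move=> pG; rewrite (MhoE 1 pG) expn1; apply: word_set_gen (word_set_powers p).
by apply/imsetP; exists 1; rewrite ?group1 ?expg1n.
Qed.

(* For a p-group, Phi(G) = G' Mho^1(G) as a product of sets, because the
   characteristic subgroup Mho^1(G) is normalised by G'. *)
Lemma Phi_derived_Mho (p : nat) : p.-group G -> 'Phi(G) = [~: G, G] * 'Mho^1(G).
Proof.
move=> pG; rewrite (Phi_joing pG) derg1 norm_joinEl //.
exact: subset_trans (der_sub 1 G) (normal_norm (Mho_normal 1 G)).
Qed.

End WordSets.

Theorem lemma5p1 (gT : finGroupType) (G : {group gT}) :
  (exists (d : nat) (w : gword d), (0 < d)%N /\ word_image w G = [~: G, G])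
  /\ (forall p : nat, prime p -> p.-group G ->
        exists (d' : nat) (w' : gword d'), (0 < d')%N /\ word_image w' G = 'Phi(G)).
Proof.
split=> [|p _ pG]; first exact: word_set_derived.
by rewrite (Phi_derived_Mho pG); apply: word_setM (word_set_derived G) (word_set_Mho1 pG).
Qed.
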